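(* The set of singular points of the singularity variety $V=0$ in $\mathbb{R}^{12}$ remains invariant under affine motions: for every invertible $2\times2$ real matrix $\mathbf{A}$ and every $\mathbf{a}\in\mathbb{R}^2$, the map $(\mathbf{k}'_1,\dots,\mathbf{k}'_6)\mapsto(\mathbf{A}\mathbf{k}'_1+\mathbf{a},\dots,\mathbf{A}\mathbf{k}'_6+\mathbf{a})$ maps singular points of $V=0$ to singular points of $V=0$ (and regular points to regular points).
   Context: A configuration is $K'=(\mathbf{k}'_1,\dots,\mathbf{k}'_6)$ with $\mathbf{k}'_i=(c_i,d_i)^T\in\mathbb{R}^2$, viewed as a point of $\mathbb{R}^{12}$. The singularity polynomial is $V(K')=\det\mathbf{V}(K')$, where $\mathbf{V}(K')$ is the $3\times3$ matrix whose $i$-th column ($i=1,2,3$) consists of the two coordinates of $\mathbf{k}'_{i+3}-\mathbf{k}'_i$ followed by the entry $\det(\mathbf{k}'_i,\mathbf{k}'_{i+3}-\mathbf{k}'_i)$ (the $2\times2$ determinant of the two column vectors). A singular point of the hypersurface $V=0$ is a point of $\mathbb{R}^{12}$ where $V$ and all its partial derivatives with respect to $c_1,\dots,c_6,d_1,\dots,d_6$ vanish. *)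

From HB Require Import structures.
From mathcomp Require Import all_boot all_order all_algebra.
From mathcomp Require Import mpoly.
Set Implicit Arguments. Unset Strict Implicit. Unset Printing Implicit Defensive.
Import Order.TTheory GRing.Theory Num.Theory.
Local Open Scope ring_scope.

(* Coordinates of R^12: variable i (i < 6) is c_{i+1}, variable 6+i is d_{i+1}. *)
Definition cidx (i : 'I_6) : 'I_12 := lshift 6 i.
Definition didx (i : 'I_6) : 'I_12 := rshift 6 i.

Section Sing.
Variable R : realFieldType.

Definition cX (i : 'I_6) : {mpoly R[12]} := 'X_(cidx i).
Definition dX (i : 'I_6) : {mpoly R[12]} := 'X_(didx i).

(* i-th column (i = 0,1,2, i.e. paper's i = 1,2,3): k'_{i+3} - k'_i and
   det(k'_i, k'_{i+3} - k'_i) = c_i (d_{i+3}-d_i) - d_i (c_{i+3}-c_i). *)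
Definition Vmx : 'M[{mpoly R[12]}]_3 :=
  \matrix_(r < 3, j < 3)
    let i  : 'I_6 := widen_ord (isT : 3 <= 6)%N j in
    let i3 : 'I_6 := rshift 3 j in
    let dc := cX i3 - cX i in
    let dd := dX i3 - dX i in
    if r == 0 :> nat then dc
    else if r == 1 :> nat then dd
    else cX i * dd - dX i * dc.

Definition Vpoly : {mpoly R[12]} := \det Vmx.

Definition singular_point (x : 'I_12 -> R) : Prop :=
  Vpoly.@[x] = 0 /\ forall k : 'I_12, (Vpoly^`M(k)).@[x] = 0.

Definition affine_map (A : 'M[R]_2) (a : 'cV[R]_2) (x : 'I_12 -> R)
    : 'I_12 -> R :=
  fun k =>
    let j : 'I_6 := match split (k : 'I_(6 + 6)) with inl i => i | inr i => i end in
    let r : 'I_2 := match split (k : 'I_(6 + 6)) with inl _ => 0 | inr _ => 1 end in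
    A r 0 * x (cidx j) + A r 1 * x (didx j) + a r 0.
End Sing.

From HB Require Import structures.
From mathcomp Require Import all_boot all_order all_algebra.
From mathcomp Require Import mpoly.
From mathcomp Require Import ring.

Import Order.TTheory GRing.Theory Num.Theory.
Local Open Scope ring_scope.

(* Under the motion phi : k'_j |-> A k'_j + a every column of the matrix V(K')
   is multiplied by one fixed 3x3 matrix of determinant (det A)^2, so
   V o phi = (det A)^2 V as polynomials.  The chain rule then gives
   (det A)^2 grad V(x) = (D phi)^T grad V(phi x), hence phi x singular implies
   x singular; the converse is the same statement for the inverse motion. *)

Lemma det_mx22 (R : comNzRingType) (M : 'M[R]_2) :
  \det M = M 0 0 * M 1 1 - M 0 1 * M 1 0.
Proof.
(* Going through [inord] lets [/=] normalize the [lift]/[widen_ord] indices. *)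
pose m (i j : nat) := M (inord i) (inord j).
have Mm i j : M i j = m i j by rewrite /m !inord_val.
rewrite (expand_det_row _ ord0) !big_ord_recr big_ord0 /cofactor /=.
by rewrite !det_mx11 !mxE !Mm /=; ring.
Qed.

Lemma det_mx33 (R : comNzRingType) (M : 'M[R]_3) :
  \det M = M 0 0 * (M 1 1 * M 2 2 - M 1 2 * M 2 1)
         - M 0 1 * (M 1 0 * M 2 2 - M 1 2 * M 2 0)
         + M 0 2 * (M 1 0 * M 2 1 - M 1 1 * M 2 0).
Proof.
pose m (i j : nat) := M (inord i) (inord j).
have Mm i j : M i j = m i j by rewrite /m !inord_val.
rewrite (expand_det_row _ ord0) !big_ord_recr big_ord0 /cofactor /=.
by rewrite !det_mx22 !mxE !Mm /=; ring.
Qed.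

Lemma mderivXU (R : nzRingType) n (j l : 'I_n) :
  ('X_j : {mpoly R[n]})^`M(l) = (j == l)%:R.
Proof.
rewrite mderivX mnm1E; have [->|_] := eqVneq j l; last by rewrite scale0r.
by rewrite -[X in (X - _)%MM]add0m addmK mpolyX0 scale1r.
Qed.

Lemma mderiv_comp_mpoly (R : comNzRingType) n k (lq : n.-tuple {mpoly R[k]})
    (i : 'I_k) (p : {mpoly R[n]}) :
  (p \mPo lq)^`M(i) = \sum_(j < n) (p^`M(j) \mPo lq) * (tnth lq j)^`M(i).
Proof.
pose chain q :=
  (q \mPo lq)^`M(i) = \sum_(j < n) (q^`M(j) \mPo lq) * (tnth lq j)^`M(i).
have chainD q r : chain q -> chain r -> chain (q + r).
  rewrite /chain !raddfD /= => -> ->; rewrite -big_split.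
  by apply: eq_bigr => j _; rewrite !raddfD mulrDl.
have chainM q r : chain q -> chain r -> chain (q * r).
  rewrite /chain rmorphM mderivM => -> ->.
  rewrite mulr_suml mulr_sumr -big_split; apply: eq_bigr => j _ /=.
  by rewrite mderivM rmorphD !rmorphM /=; ring.
have chainC c : chain c%:MP.
  rewrite /chain comp_mpolyC mderivC big1 // => j _.
  by rewrite mderivC comp_mpoly0 mul0r.
have chainX j : chain 'X_j.
  rewrite /chain comp_mpolyXU -tnth_nth (bigD1 j) //= big1 => [|l /negbTE ne_lj].
    by rewrite mderivXU eqxx comp_mpoly1 mul1r addr0.
  by rewrite mderivXU eq_sym ne_lj comp_mpoly0 mul0r.
have chainXn j e : chain ('X_j ^+ e).
  elim: e => [|e IHe]; first by rewrite expr0 -mpolyC1; apply: chainC.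
  by rewrite exprS; apply: (chainM).
elim/mpolyind: p => [|c m p _ _ IHp]; first by rewrite -mpolyC0; apply: chainC.
apply: (chainD) => //; rewrite -mul_mpolyC mpolyXE_id; apply: (chainM) => //.
apply: big_ind => [||j _]; last exact: chainXn.
  by rewrite -mpolyC1; apply: chainC.
exact: chainM.
Qed.

Lemma sum_ord2 (V : nmodType) (F : 'I_2 -> V) : \sum_(i < 2) F i = F 0 + F 1.
Proof. by rewrite big_ord_recl big_ord1; congr (_ + F _); apply: val_inj. Qed.

Lemma affine_map_cidx (R : realFieldType) (A : 'M[R]_2) a x i :
  affine_map A a x (cidx i) = A 0 0 * x (cidx i) + A 0 1 * x (didx i) + a 0 0.
Proof. by rewrite /affine_map /cidx (unsplitK (inl i)). Qed.

Lemma affine_map_didx (R : realFieldType) (A : 'M[R]_2) a x i :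
  affine_map A a x (didx i) = A 1 0 * x (cidx i) + A 1 1 * x (didx i) + a 1 0.
Proof. by rewrite /affine_map /didx (unsplitK (inr i)). Qed.

Lemma affine_map_comp (R : realFieldType) (A B : 'M[R]_2) a b x :
  affine_map B b (affine_map A a x) =1 affine_map (B *m A) (B *m a + b) x.
Proof.
move=> k; rewrite {1}/affine_map affine_map_cidx affine_map_didx.
by rewrite /affine_map; case: (split _) => j; rewrite !mxE !sum_ord2; ring.
Qed.

Lemma affine_map1 (R : realFieldType) (x : 'I_12 -> R) : affine_map 1%:M 0 x =1 x.
Proof.
move=> k; rewrite /affine_map !mxE /=.
by case: splitP => j k_j; rewrite /cidx /didx /= !(mul1r, mul0r, addr0, add0r);
  congr x; apply: val_inj; rewrite /= k_j.
Qed.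

Lemma singular_point_ext (R : realFieldType) (x y : 'I_12 -> R) :
  x =1 y -> singular_point x -> singular_point y.
Proof.
by move=> xy [V0 dV0]; split=> [|k]; rewrite -(meval_eq _ xy).
Qed.

Section AffineMotion.
Variables (R : realFieldType) (A : 'M[R]_2) (a : 'cV[R]_2).

Definition affine_mpoly : 12.-tuple {mpoly R[12]} :=
  [tuple match split (k : 'I_(6 + 6)) with
         | inl j => (A 0 0)%:MP * cX R j + (A 0 1)%:MP * dX R j + (a 0 0)%:MP
         | inr j => (A 1 0)%:MP * cX R j + (A 1 1)%:MP * dX R j + (a 1 0)%:MP
         end | k < 12].

Lemma cX_comp_affine i :
  cX R i \mPo affine_mpoly = (A 0 0)%:MP * cX R i + (A 0 1)%:MP * dX R i + (a 0 0)%:MP.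
Proof. by rewrite /cX comp_mpolyXU -tnth_nth tnth_mktuple /cidx (unsplitK (inl i)). Qed.

Lemma dX_comp_affine i :
  dX R i \mPo affine_mpoly = (A 1 0)%:MP * cX R i + (A 1 1)%:MP * dX R i + (a 1 0)%:MP.
Proof. by rewrite /dX comp_mpolyXU -tnth_nth tnth_mktuple /didx (unsplitK (inr i)). Qed.

Lemma meval_comp_affine_mpoly p x :
  (p \mPo affine_mpoly).@[x] = p.@[affine_map A a x].
Proof.
rewrite comp_mpoly_meval; apply: meval_eq => k.
rewrite tnth_mktuple /affine_map /cX /dX.
by case: (split _) => j; rewrite !(mevalD, mevalM, mevalC, mevalXU).
Qed.

(* The motion sends the column (w, det(k, w)) of [Vmx], where k = k'_i and
   w = k'_(i+3) - k'_i, to (A w, det(A k + a, A w)), and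
   det(A k + a, A w) = det A * det(k, w) + det(a, A w). *)
Definition motion_mx : 'M[R]_3 :=
  let b s := a 0 0 * A 1 s - a 1 0 * A 0 s in
  \matrix_(r < 3, s < 3)
    nth 0 (nth [::] [:: [:: A 0 0; A 0 1; 0];
                        [:: A 1 0; A 1 1; 0];
                        [:: b 0;   b 1;   \det A]] r) s.

Lemma det_motion_mx : \det motion_mx = \det A ^+ 2.
Proof. by rewrite det_mx33 !mxE /= det_mx22; ring. Qed.

Lemma Vmx_comp_affine :
  map_mx (comp_mpoly affine_mpoly) (Vmx R) = map_mx (@mpolyC 12 R) motion_mx *m Vmx R.
Proof.
apply/matrixP => r j; rewrite !mxE !big_ord_recr big_ord0 /= !mxE /=.
case: r => [[|[|[|//]]] _] /=; rewrite ?det_mx22 !(rmorphB, rmorphM, rmorph0) /=;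
  by rewrite ?cX_comp_affine ?dX_comp_affine; ring.
Qed.

Lemma Vpoly_comp_affine : Vpoly R \mPo affine_mpoly = (\det A ^+ 2)%:MP * Vpoly R.
Proof. by rewrite /Vpoly -det_map_mx Vmx_comp_affine det_mulmx det_map_mx det_motion_mx. Qed.

Lemma Vpoly_affine_map x :
  (Vpoly R).@[affine_map A a x] = \det A ^+ 2 * (Vpoly R).@[x].
Proof. by rewrite -meval_comp_affine_mpoly Vpoly_comp_affine mevalM mevalC. Qed.

Lemma mderiv_Vpoly_affine_map k x :
  \det A ^+ 2 * ((Vpoly R)^`M(k)).@[x] =
  \sum_(l < 12) ((Vpoly R)^`M(l)).@[affine_map A a x]
                * ((tnth affine_mpoly l)^`M(k)).@[x].
Proof.
rewrite -[\det A ^+ 2](mevalC x) -mevalM -mderiv_mulC -Vpoly_comp_affine.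
rewrite mderiv_comp_mpoly raddf_sum; apply: eq_bigr => l _ /=.
by rewrite mevalM meval_comp_affine_mpoly.
Qed.

Lemma singular_point_affine_map x :
  A \in unitmx -> singular_point (affine_map A a x) -> singular_point x.
Proof.
move=> hA [V0 dV0]; have detA2 : \det A ^+ 2 != 0.
  by rewrite expf_neq0 // -unitfE -unitmxE.
split=> [|k]; apply/eqP; rewrite -(mulrI_eq0 _ (mulfI detA2)).
  by rewrite -Vpoly_affine_map V0.
by rewrite mderiv_Vpoly_affine_map big1 // => l _; rewrite dV0 mul0r.
Qed.

End AffineMotion.

Theorem lemma3 (R : realFieldType) (A : 'M[R]_2) (a : 'cV[R]_2)
    (hA : A \in unitmx) (x : 'I_12 -> R) :
  singular_point (affine_map A a x) <-> singular_point x.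
Proof.
split=> [|sing_x]; first exact: singular_point_affine_map.
apply: (@singular_point_affine_map R (invmx A) (- (invmx A *m a))).
  by rewrite unitmx_inv.
apply: singular_point_ext sing_x => k.
by rewrite affine_map_comp mulVmx // subrr affine_map1.
Qed.
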